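(* Consider the $\mathcal N$-system (setting in the context) with $\boldsymbol\lambda\to(\mu_1,\mu_2)$, operating under a scheduling policy that achieves state space collapse. Let $\Phi=\{\boldsymbol\phi\in\mathbb C^2:\mathrm{Re}(\phi_1)\le0,\mathrm{Re}(\phi_1+\phi_2)\le0\}$ and $\boldsymbol\phi\in\Phi$. Then, with expectations under the stationary distribution: 1. $\lim_{\epsilon\to0}|\mathbb E[e^{\epsilon(\phi_1q_1+\phi_2q_2)}]|<\infty$, $\lim_{\epsilon\to0}|\mathbb E[e^{\epsilon(\phi_1+\phi_2)q_2}\mid q_1\le q_2]|<\infty$ and $\lim_{\epsilon\to0}|\mathbb E[e^{\epsilon\phi_1q_1}\mid q_2=0]|<\infty$; 2. $\lim_{\epsilon\to0}\mathbb E[e^{\epsilon(\phi_1q_1+\phi_2q_2)}]=\lim_{\epsilon\to0}\mathbb E\big[e^{\epsilon(\phi_1(q_1-q_2)\mathbf 1_{\{q_1\ge q_2\}}+(\phi_1+\phi_2)q_2)}\big]$.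
   Context: $\mathcal N$-system: continuous time, queues $q_1,q_2$ with independent Poisson arrivals of rates $\lambda_1,\lambda_2$; server $S_1$ (exponential rate $\mu_1$) serves either class, one queue at a time; server $S_2$ (rate $\mu_2$) serves only class 2; configurations ($S_1\to q_1$, $S_2\to q_2$) or (both $\to q_2$). The policy makes $(q_1(t),q_2(t))$ an irreducible aperiodic positive recurrent Markov chain; $(q_1,q_2)$ is stationary. $\lambda_1=(1-\epsilon)\mu_1$, $\lambda_1+\lambda_2=(1-\gamma\epsilon)(\mu_1+\mu_2)$, fixed $\gamma>0$, $\epsilon\to0$. With $\mathcal K_3=\{\mathbf x\in\mathbb R^2_+:x_2\le x_1\}$ and $\mathbf q_{\perp\mathcal K_3}=\frac{q_2-q_1}{2}(-1,1)\mathbf 1_{\{q_2>q_1\}}$, state space collapse means: for every $\theta\ge0$ there are $\epsilon(\theta)>0$ and $C^\star<\infty$ with $\mathbb E[e^{\epsilon\theta\|\mathbf q_{\perp\mathcal K_3}\|}]<C^\star$ for $0<\epsilon\le\epsilon(\theta)$, and for each nonnegative integer $r$, $\mathbb E\|\mathbf q_{\perp\mathcal K_3}\|^r\le C_r$ independent of $\epsilon$. *)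

From Stdlib Require Import Reals Lra Relations Bool.
From Coquelicot Require Import Coquelicot.
Open Scope R_scope.
Open Scope bool_scope.

Definition state : Type := (nat * nat)%type.

(* lambda1 = (1-eps) mu1,  lambda1 + lambda2 = (1 - gamma eps)(mu1 + mu2) *)
Definition lam1 (mu1 eps : R) : R := (1 - eps) * mu1.
Definition lam2 (mu1 mu2 gamma eps : R) : R :=
  (1 - gamma * eps) * (mu1 + mu2) - (1 - eps) * mu1.

(** A stationary (possibly randomized) scheduling policy: sigma x in [0,1] is
    the probability that in state x the configuration (S1 -> q1, S2 -> q2) is
    used; with probability 1 - sigma x both servers serve q2.
    Deterministic policies are the case sigma x in {0,1}. *)
Definition policy_ok (sigma : state -> R) : Prop :=
  forall x, 0 <= sigma x <= 1.

(** Config (S1->q1,S2->q2): q1 -1 at rate mu1 if q1>0, q2 -1 at rate mu2 if q2>0.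
    Config (both -> q2): q2 -1 at rate mu1+mu2 if q2>0. *)
Definition rate (mu1 mu2 gamma eps : R) (sigma : state -> R) (x y : state) : R :=
  let '(a, b) := x in
  let '(c, d) := y in
  if Nat.eqb c (S a) && Nat.eqb d b then lam1 mu1 eps
  else if Nat.eqb c a && Nat.eqb d (S b) then lam2 mu1 mu2 gamma eps
  else if Nat.ltb 0 a && Nat.eqb (S c) a && Nat.eqb d b then sigma x * mu1
  else if Nat.ltb 0 b && Nat.eqb c a && Nat.eqb (S d) b then
    sigma x * mu2 + (1 - sigma x) * (mu1 + mu2)
  else 0.

Definition outrate (mu1 mu2 gamma eps : R) (sigma : state -> R) (y : state) : R :=
  let '(a, b) := y in
  rate mu1 mu2 gamma eps sigma y (S a, b)
  + rate mu1 mu2 gamma eps sigma y (a, S b)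
  + (if Nat.ltb 0 a then rate mu1 mu2 gamma eps sigma y (pred a, b) else 0)
  + (if Nat.ltb 0 b then rate mu1 mu2 gamma eps sigma y (a, pred b) else 0).

(** Total inflow of probability mass into y (only neighbours can jump to y). *)
Definition inflow (mu1 mu2 gamma eps : R) (sigma : state -> R) (pi : state -> R)
  (y : state) : R :=
  let '(a, b) := y in
  pi (S a, b) * rate mu1 mu2 gamma eps sigma (S a, b) y
  + pi (a, S b) * rate mu1 mu2 gamma eps sigma (a, S b) y
  + (if Nat.ltb 0 a then pi (pred a, b) * rate mu1 mu2 gamma eps sigma (pred a, b) y else 0)
  + (if Nat.ltb 0 b then pi (a, pred b) * rate mu1 mu2 gamma eps sigma (a, pred b) y else 0).

Definition irreducible (mu1 mu2 gamma eps : R) (sigma : state -> R) : Prop :=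
  forall x y : state,
    clos_refl_trans state (fun u v => 0 < rate mu1 mu2 gamma eps sigma u v) x y.

(* summability of a nonnegative function on N^2 (iterated = unordered sum) *)
Definition dsummable (f : state -> R) : Prop :=
  (forall i, ex_series (fun j => f (i, j))) /\
  ex_series (fun i => Series (fun j => f (i, j))).
Definition dsum (f : state -> R) : R := Series (fun i => Series (fun j => f (i, j))).
Definition dsumC (f : state -> C) : C :=
  (dsum (fun x => Re (f x)), dsum (fun x => Im (f x))).

Definition is_prob (pi : state -> R) : Prop :=
  (forall x, 0 <= pi x) /\ dsummable pi /\ dsum pi = 1.

(** pi is the stationary distribution of the chain: a probability solving the
    global balance equations pi Q = 0. *)
Definition stationary (mu1 mu2 gamma eps : R) (sigma : state -> R) (pi : state -> R) : Prop :=
  is_prob pi /\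
  forall y, pi y * outrate mu1 mu2 gamma eps sigma y = inflow mu1 mu2 gamma eps sigma pi y.

Definition Pr (pi : state -> R) (A : state -> bool) : R :=
  dsum (fun x => if A x then pi x else 0).
Definition ExpR (pi : state -> R) (f : state -> R) : R := dsum (fun x => pi x * f x).
Definition integrableC (pi : state -> R) (g : state -> C) : Prop :=
  dsummable (fun x => pi x * Cmod (g x)).
Definition ExpC (pi : state -> R) (g : state -> C) : C :=
  dsumC (fun x => Cmult (RtoC (pi x)) (g x)).
Definition restrC (A : state -> bool) (g : state -> C) : state -> C :=
  fun x => if A x then g x else RtoC 0.
Definition CondExpC (pi : state -> R) (A : state -> bool) (g : state -> C) : C :=
  Cmult (ExpC pi (restrC A g)) (RtoC (/ Pr pi A)).

Definition cexp (z : C) : C := (exp (Re z) * cos (Im z), exp (Re z) * sin (Im z)).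

Definition q1R (x : state) : R := INR (fst x).
Definition q2R (x : state) : R := INR (snd x).

Definition qperp (x : state) : R * R :=
  if Nat.ltb (fst x) (snd x)
  then ((q2R x - q1R x) / 2 * (-1), (q2R x - q1R x) / 2 * 1)
  else (0, 0).
Definition qperp_norm (x : state) : R :=
  sqrt (fst (qperp x) ^ 2 + snd (qperp x) ^ 2).

Definition ssc (epsbar : R) (pi : R -> state -> R) : Prop :=
  (forall theta, 0 <= theta ->
     exists eps_theta Cstar, 0 < eps_theta /\
       forall eps, 0 < eps <= eps_theta -> eps < epsbar ->
         dsummable (fun x => pi eps x * exp (eps * theta * qperp_norm x)) /\
         ExpR (pi eps) (fun x => exp (eps * theta * qperp_norm x)) < Cstar)
  /\
  (forall r : nat, exists Cr,
     forall eps, 0 < eps < epsbar ->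
       dsummable (fun x => pi eps x * qperp_norm x ^ r) /\
       ExpR (pi eps) (fun x => qperp_norm x ^ r) <= Cr).

Definition ev_q1_le_q2 (x : state) : bool := Nat.leb (fst x) (snd x).
Definition ev_q2_eq0 (x : state) : bool := Nat.eqb (snd x) 0.

Definition tr_joint (phi1 phi2 : C) (eps : R) (x : state) : C :=
  cexp (Cmult (RtoC eps) (Cplus (Cmult phi1 (RtoC (q1R x))) (Cmult phi2 (RtoC (q2R x))))).
Definition tr_q2 (phi1 phi2 : C) (eps : R) (x : state) : C :=
  cexp (Cmult (RtoC eps) (Cmult (Cplus phi1 phi2) (RtoC (q2R x)))).
Definition tr_q1 (phi1 : C) (eps : R) (x : state) : C :=
  cexp (Cmult (RtoC eps) (Cmult phi1 (RtoC (q1R x)))).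
Definition tr_collapsed (phi1 phi2 : C) (eps : R) (x : state) : C :=
  cexp (Cmult (RtoC eps)
    (Cplus (Cmult phi1 (RtoC ((q1R x - q2R x) * (if Nat.leb (snd x) (fst x) then 1 else 0))))
           (Cmult (Cplus phi1 phi2) (RtoC (q2R x))))).

From Stdlib Require Import Reals Lra.
From Coquelicot Require Import Coquelicot.
Open Scope R_scope.

(* The modulus of the joint transform is e^{eps Re(phi1 q1 + phi2 q2)}, and
   Re(phi1 q1 + phi2 q2) = Re(phi1 + phi2) q2 - Re(phi1) (q2 - q1) <= -Re(phi1) (q2 - q1)^+,
   with (q2 - q1)^+ <= 2 |q_perp|; so state space collapse bounds its expectation, while
   the two conditional transforms have modulus at most 1.  Moreover the joint transform
   is the collapsed one times e^{-eps phi1 (q2 - q1)^+}, hence by |e^z - 1| <= |z| e^|z|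
   and AM-GM their difference is at most eps |phi1| (|q_perp|^2 + e^{4 eps |phi1| |q_perp|}),
   whose expectation is O(eps) by state space collapse. *)

Lemma exp_le_exp x y : x <= y -> exp x <= exp y.
Proof. intros [Hlt | ->]; [left; now apply exp_increasing | lra]. Qed.

Lemma Rabs_sin_le x : Rabs (sin x) <= Rabs x.
Proof.
  assert (Hpos : forall t, 0 <= t -> Rabs (sin t) <= t).
  { intros t Ht. destruct (Rle_lt_dec 1 t) as [Hge | Hlt].
    - apply Rabs_le. pose proof (SIN_bound t). lra.
    - assert (Hsin : 0 <= sin t) by (apply sin_ge_0; pose proof PI2_1; lra).
      rewrite Rabs_pos_eq by exact Hsin.
      destruct Ht as [Ht | <-]; [left; now apply sin_lt_x | rewrite sin_0; lra]. }
  destruct (Rle_lt_dec 0 x) as [Hx | Hx].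
  - rewrite (Rabs_pos_eq x) by exact Hx. now apply Hpos.
  - rewrite <- Rabs_Ropp, <- sin_neg, (Rabs_left x) by exact Hx. apply Hpos. lra.
Qed.

Lemma one_minus_cos_le b : 1 - cos b <= b ^ 2 / 2.
Proof.
  replace b with (2 * (b / 2)) at 1 by field. rewrite cos_2a_sin.
  assert (Hsq : sin (b / 2) ^ 2 <= (b / 2) ^ 2).
  { rewrite <- (pow2_abs (sin _)), <- (pow2_abs (b / 2)).
    apply pow_incr. split; [apply Rabs_pos | apply Rabs_sin_le]. }
  nra.
Qed.

Lemma Rabs_exp_sub_1_le a : Rabs (exp a - 1) <= Rabs a * exp (Rabs a).
Proof.
  pose proof (exp_ineq1_le a). pose proof (exp_ineq1_le (- a)). pose proof (exp_pos a).
  assert (Hinv : exp (- a) * exp a = 1) by (rewrite <- exp_plus, Rplus_opp_l; apply exp_0).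
  destruct (Rle_lt_dec 0 a) as [Ha | Ha].
  - rewrite !Rabs_pos_eq by lra. nra.
  - assert (exp a < 1) by (rewrite <- exp_0; now apply exp_increasing).
    rewrite Rabs_left1, (Rabs_left a) by lra. nra.
Qed.

Lemma Cmod_cexp z : Cmod (cexp z) = exp (Re z).
Proof.
  unfold cexp, Cmod; cbn [fst snd].
  replace ((exp (Re z) * cos (Im z)) ^ 2 + (exp (Re z) * sin (Im z)) ^ 2)
    with (exp (Re z) ^ 2 * (sin (Im z) ^ 2 + cos (Im z) ^ 2)) by ring.
  rewrite <- !Rsqr_pow2, sin2_cos2, Rmult_1_r, Rsqr_pow2.
  apply sqrt_pow2. left; apply exp_pos.
Qed.

Lemma Cmod_cexp_le_1 z : Re z <= 0 -> Cmod (cexp z) <= 1.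
Proof. intros Hz. rewrite Cmod_cexp, <- exp_0. now apply exp_le_exp. Qed.

Lemma cexp_plus w z : cexp (w + z)%C = (cexp w * cexp z)%C.
Proof.
  unfold cexp. rewrite re_plus, im_plus, exp_plus, cos_plus, sin_plus.
  unfold Cmult; cbn [fst snd]. f_equal; ring.
Qed.

Lemma Rabs_Im_le_Cmod z : Rabs (Im z) <= Cmod z.
Proof. eapply Rle_trans; [apply Rmax_r | apply Rmax_Cmod]. Qed.

Lemma Cmod_le_Rabs_Re_Im (z : C) : Cmod z <= Rabs (Re z) + Rabs (Im z).
Proof.
  pose proof (Rabs_pos (Re z)). pose proof (Rabs_pos (Im z)).
  rewrite <- (sqrt_pow2 (Rabs (Re z) + Rabs (Im z))) by lra.
  unfold Cmod. apply sqrt_le_1_alt.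
  rewrite <- (pow2_abs (fst z)), <- (pow2_abs (snd z)). unfold Re, Im in *. nra.
Qed.

Lemma Cmod_cexp_sub_1_le z : Cmod (cexp z - 1)%C <= Cmod z * exp (Cmod z).
Proof.
  pose proof (Cmod_ge_0 z) as HX.
  pose proof (re_le_Cmod z) as Ha. pose proof (Rabs_Im_le_Cmod z) as Hb.
  pose proof (Cmod2_alt z) as HX2.
  set (X := Cmod z) in *. set (a := Re z) in *. set (b := Im z) in *.
  set (E := exp a). set (F := exp X).
  assert (HEF : E <= F) by (apply exp_le_exp; pose proof (Rle_abs a); lra).
  assert (HF1 : 1 <= F) by (rewrite <- exp_0; now apply exp_le_exp).
  assert (HE1 : (E - 1) ^ 2 <= a ^ 2 * F ^ 2).
  { rewrite <- (pow2_abs (E - 1)), <- (pow2_abs a), <- Rpow_mult_distr.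
    apply pow_incr. split; [apply Rabs_pos |].
    eapply Rle_trans; [apply Rabs_exp_sub_1_le |].
    apply Rmult_le_compat_l; [apply Rabs_pos | now apply exp_le_exp]. }
  assert (Hcos : 0 <= 1 - cos b <= b ^ 2 / 2)
    by (pose proof (COS_bound b); pose proof (one_minus_cos_le b); lra).
  assert (Hsc : sin b ^ 2 + cos b ^ 2 = 1) by (rewrite <- !Rsqr_pow2; apply sin2_cos2).
  assert (Hmod : Cmod (cexp z - 1)%C ^ 2 = (E - 1) ^ 2 + 2 * E * (1 - cos b)).
  { rewrite Cmod2_alt.
    change (Re (cexp z - 1)%C) with (E * cos b - 1).
    change (Im (cexp z - 1)%C) with (E * sin b - 0).
    transitivity ((E - 1) ^ 2 + 2 * E * (1 - cos b) + E ^ 2 * (sin b ^ 2 + cos b ^ 2 - 1));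
      [ring | rewrite Hsc; ring]. }
  assert (HE0 : 0 < E) by apply exp_pos.
  assert (Hsq : Cmod (cexp z - 1)%C ^ 2 <= (X * F) ^ 2).
  { assert (H1 : 2 * E * (1 - cos b) <= F * b ^ 2) by nra.
    assert (H2 : F * b ^ 2 <= F ^ 2 * b ^ 2) by (pose proof (pow2_ge_0 b); nra).
    rewrite Hmod, Rpow_mult_distr, HX2. nra. }
  pose proof (Cmod_ge_0 (cexp z - 1)%C). assert (0 <= X * F) by nra. nra.
Qed.

Lemma qperp_norm_nonneg x : 0 <= qperp_norm x.
Proof. apply sqrt_pos. Qed.

Lemma qperp_norm_ge x : q2R x - q1R x <= 2 * qperp_norm x.
Proof.
  pose proof (qperp_norm_nonneg x).
  destruct (Nat.lt_ge_cases (fst x) (snd x)) as [Hlt | Hge].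
  - unfold qperp_norm, qperp. rewrite (proj2 (Nat.ltb_lt _ _) Hlt). cbn [fst snd].
    set (d := q2R x - q1R x).
    assert (Hd : d / 2 <= sqrt ((d / 2) ^ 2))
      by (rewrite <- pow2_abs, sqrt_pow2 by apply Rabs_pos; apply Rle_abs).
    assert (sqrt ((d / 2) ^ 2) <= sqrt ((d / 2 * -1) ^ 2 + (d / 2 * 1) ^ 2))
      by (apply sqrt_le_1_alt; nra).
    lra.
  - assert (q2R x <= q1R x) by (apply le_INR; exact Hge). lra.
Qed.

Definition q2_excess (x : state) : R := Rmax 0 (q2R x - q1R x).

Lemma q2_excess_nonneg x : 0 <= q2_excess x.
Proof. apply Rmax_l. Qed.

Lemma q2_excess_le x : q2_excess x <= 2 * qperp_norm x.
Proof.
  apply Rmax_lub; [pose proof (qperp_norm_nonneg x); lra | apply qperp_norm_ge].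
Qed.

Lemma tr_joint_factor phi1 phi2 eps x :
  tr_joint phi1 phi2 eps x =
  (tr_collapsed phi1 phi2 eps x * cexp (RtoC eps * (- phi1 * RtoC (q2_excess x))))%C.
Proof.
  unfold tr_joint, tr_collapsed, q2_excess. rewrite <- cexp_plus. f_equal.
  destruct (Nat.leb_spec (snd x) (fst x)) as [Hle | Hlt].
  - apply le_INR in Hle. rewrite Rmax_left by (unfold q1R, q2R; lra).
    rewrite !RtoC_mult, !RtoC_minus. ring.
  - apply lt_INR in Hlt. rewrite Rmax_right by (unfold q1R, q2R; lra).
    rewrite !RtoC_mult, !RtoC_minus. ring.
Qed.

Section PointwiseBounds.

Variables (phi1 phi2 : C) (eps : R).
Hypotheses (heps : 0 <= eps) (hphi1 : Re phi1 <= 0) (hphi12 : Re (phi1 + phi2)%C <= 0).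

Lemma Cmod_tr_q1_le_1 x : Cmod (tr_q1 phi1 eps x) <= 1.
Proof.
  apply Cmod_cexp_le_1. rewrite re_scal_l, re_scal_r.
  assert (Re phi1 * q1R x <= 0) by (pose proof (pos_INR (fst x)); unfold q1R; nra).
  nra.
Qed.

Lemma Cmod_tr_q2_le_1 x : Cmod (tr_q2 phi1 phi2 eps x) <= 1.
Proof.
  apply Cmod_cexp_le_1. rewrite re_scal_l, re_scal_r.
  assert (Re (phi1 + phi2)%C * q2R x <= 0) by (pose proof (pos_INR (snd x)); unfold q2R; nra).
  nra.
Qed.

Lemma Cmod_tr_collapsed_le_1 x : Cmod (tr_collapsed phi1 phi2 eps x) <= 1.
Proof.
  apply Cmod_cexp_le_1. rewrite re_scal_l, re_plus, !re_scal_r.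
  set (d := (q1R x - q2R x) * (if Nat.leb (snd x) (fst x) then 1 else 0)).
  assert (Hd : 0 <= d).
  { unfold d. destruct (Nat.leb_spec (snd x) (fst x)) as [Hle | _]; [| lra].
    apply le_INR in Hle. unfold q1R, q2R. lra. }
  assert (Re phi1 * d <= 0) by nra.
  assert (Re (phi1 + phi2)%C * q2R x <= 0) by (pose proof (pos_INR (snd x)); unfold q2R; nra).
  nra.
Qed.

Lemma Cmod_tr_joint_le x :
  Cmod (tr_joint phi1 phi2 eps x) <= exp (eps * (- 2 * Re phi1) * qperp_norm x).
Proof.
  rewrite tr_joint_factor, Cmod_mult, Cmod_cexp, re_scal_l, re_scal_r, re_opp.
  pose proof (q2_excess_le x). pose proof (q2_excess_nonneg x).
  apply Rle_trans with (1 * exp (eps * (- Re phi1 * q2_excess x))).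
  - apply Rmult_le_compat_r; [left; apply exp_pos | apply Cmod_tr_collapsed_le_1].
  - rewrite Rmult_1_l. apply exp_le_exp.
    assert (- Re phi1 * q2_excess x <= - Re phi1 * (2 * qperp_norm x))
      by (apply Rmult_le_compat_l; lra).
    nra.
Qed.

Lemma Cmod_tr_joint_sub_collapsed_le x :
  Cmod (tr_joint phi1 phi2 eps x - tr_collapsed phi1 phi2 eps x)%C <=
  eps * Cmod phi1 * (qperp_norm x ^ 2 + exp (eps * (4 * Cmod phi1) * qperp_norm x)).
Proof.
  rewrite tr_joint_factor.
  set (z := (RtoC eps * (- phi1 * RtoC (q2_excess x)))%C).
  set (c := tr_collapsed phi1 phi2 eps x).
  replace (c * cexp z - c)%C with (c * (cexp z - 1))%C by ring.
  set (n := qperp_norm x). set (a := eps * Cmod phi1).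
  assert (Ha : 0 <= a) by (pose proof (Cmod_ge_0 phi1); unfold a; nra).
  assert (Hz : 0 <= Cmod z <= 2 * a * n).
  { unfold z. rewrite !Cmod_mult, Cmod_opp, !Cmod_R, (Rabs_pos_eq eps) by exact heps.
    rewrite Rabs_pos_eq by apply q2_excess_nonneg.
    replace (eps * (Cmod phi1 * q2_excess x)) with (a * q2_excess x) by (unfold a; ring).
    pose proof (q2_excess_le x). pose proof (q2_excess_nonneg x).
    split; [now apply Rmult_le_pos |].
    replace (2 * a * n) with (a * (2 * n)) by ring. now apply Rmult_le_compat_l. }
  set (G := exp (2 * a * n)).
  assert (HG : G * G = exp (eps * (4 * Cmod phi1) * n))
    by (unfold G, a; rewrite <- exp_plus; f_equal; ring).
  assert (HeG : exp (Cmod z) <= G) by (apply exp_le_exp; lra).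
  assert (Hamgm : 2 * n * G <= n ^ 2 + G * G) by (pose proof (pow2_ge_0 (n - G)); nra).
  rewrite Cmod_mult, <- HG.
  apply Rle_trans with (1 * (Cmod z * exp (Cmod z))).
  - apply Rmult_le_compat; [apply Cmod_ge_0 | apply Cmod_ge_0 |
      apply Cmod_tr_collapsed_le_1 | apply Cmod_cexp_sub_1_le].
  - pose proof (exp_pos (Cmod z)). nra.
Qed.

End PointwiseBounds.

Lemma series_dominated (f g : nat -> R) :
  (forall n, Rabs (f n) <= g n) -> ex_series g -> ex_series f /\ Rabs (Series f) <= Series g.
Proof.
  intros Hfg Hg.
  assert (Habs : ex_series (fun n => Rabs (f n))).
  { apply (@ex_series_le R_AbsRing R_CompleteNormedModule _ g); [| exact Hg].
    intro n. change (norm (Rabs (f n))) with (Rabs (Rabs (f n))).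
    rewrite Rabs_Rabsolu. apply Hfg. }
  split; [now apply ex_series_Rabs |].
  eapply Rle_trans; [now apply Series_Rabs |].
  apply Series_le; [| exact Hg]. intro n. split; [apply Rabs_pos | apply Hfg].
Qed.

Lemma dsum_dominated (f g : state -> R) :
  (forall x, Rabs (f x) <= g x) -> dsummable g -> dsummable f /\ Rabs (dsum f) <= dsum g.
Proof.
  intros Hfg [Hrows Hg].
  assert (Hi : forall i, ex_series (fun j => f (i, j)) /\
     Rabs (Series (fun j => f (i, j))) <= Series (fun j => g (i, j)))
    by (intro i; apply series_dominated; auto).
  destruct (series_dominated (fun i => Series (fun j => f (i, j)))
              (fun i => Series (fun j => g (i, j)))) as [Hf Hbound];
    [intro i; apply Hi | exact Hg |].
  split; [split; [intro i; apply Hi | exact Hf] | exact Hbound].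
Qed.

Lemma dsummable_ext (f g : state -> R) : (forall x, f x = g x) -> dsummable f -> dsummable g.
Proof.
  intros Hfg [Hrows Hf]. split.
  - intro i. apply (ex_series_ext (fun j => f (i, j))); auto.
  - apply (ex_series_ext (fun i => Series (fun j => f (i, j)))); auto.
    intro i. apply Series_ext. auto.
Qed.

Lemma dsum_ext (f g : state -> R) : (forall x, f x = g x) -> dsum f = dsum g.
Proof.
  intros Hfg. unfold dsum. apply Series_ext. intro i. apply Series_ext. auto.
Qed.

Lemma dsum_plus (f g : state -> R) : dsummable f -> dsummable g ->
  dsummable (fun x => f x + g x) /\ dsum (fun x => f x + g x) = dsum f + dsum g.
Proof.
  intros [Hfi Hf] [Hgi Hg].
  assert (Hrow : forall i, Series (fun j => f (i, j) + g (i, j)) =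
                           Series (fun j => f (i, j)) + Series (fun j => g (i, j)))
    by (intro i; apply Series_plus; auto).
  split; [split |].
  - intro i. apply (ex_series_plus (V := R_NormedModule)); auto.
  - apply (ex_series_ext (fun i => Series (fun j => f (i, j)) + Series (fun j => g (i, j)))).
    + intro i. symmetry. apply Hrow.
    + apply (ex_series_plus (V := R_NormedModule)); auto.
  - unfold dsum. rewrite <- Series_plus by auto. apply Series_ext. exact Hrow.
Qed.

Lemma dsum_scal (c : R) (f : state -> R) : dsummable f ->
  dsummable (fun x => c * f x) /\ dsum (fun x => c * f x) = c * dsum f.
Proof.
  intros [Hfi Hf].
  assert (Hrow : forall i, Series (fun j => c * f (i, j)) = c * Series (fun j => f (i, j)))
    by (intro i; apply Series_scal_l).
  split; [split |].
  - intro i. apply (ex_series_scal_l (V := R_NormedModule)); auto.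
  - apply (ex_series_ext (fun i => c * Series (fun j => f (i, j)))).
    + intro i. symmetry. apply Hrow.
    + apply (ex_series_scal_l (V := R_NormedModule)); auto.
  - unfold dsum. rewrite <- Series_scal_l. apply Series_ext. exact Hrow.
Qed.

Lemma dsum_minus (f g : state -> R) : dsummable f -> dsummable g ->
  dsum (fun x => f x - g x) = dsum f - dsum g.
Proof.
  intros [Hfi Hf] [Hgi Hg]. unfold dsum.
  rewrite <- Series_minus by auto. apply Series_ext. intro i. apply Series_minus; auto.
Qed.

Lemma series_nonneg (a : nat -> R) : (forall n, 0 <= a n) -> ex_series a -> 0 <= Series a.
Proof.
  intros Ha Hex. rewrite <- (Rmult_0_l (Series a)), <- Series_scal_l.
  apply Series_le; [| exact Hex]. intro n. rewrite Rmult_0_l. split; [lra | apply Ha].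
Qed.

Lemma dsum_nonneg (f : state -> R) : (forall x, 0 <= f x) -> dsummable f -> 0 <= dsum f.
Proof.
  intros Hf [Hrows Hsum]. apply series_nonneg; [| exact Hsum].
  intro i. apply series_nonneg; auto.
Qed.

Section Expectations.

Variable pi : state -> R.
Hypothesis hpi : forall x, 0 <= pi x.

Lemma ExpR_plus (u v : state -> R) :
  dsummable (fun x => pi x * u x) -> dsummable (fun x => pi x * v x) ->
  dsummable (fun x => pi x * (u x + v x)) /\
  ExpR pi (fun x => u x + v x) = ExpR pi u + ExpR pi v.
Proof.
  intros Hu Hv. destruct (dsum_plus _ _ Hu Hv) as [Hs Heq].
  assert (Hdistr : forall x, pi x * u x + pi x * v x = pi x * (u x + v x))
    by (intro x; ring).
  split; [exact (dsummable_ext _ _ Hdistr Hs) |].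
  unfold ExpR. rewrite <- Heq. symmetry. exact (dsum_ext _ _ Hdistr).
Qed.

Lemma ExpR_scal (a : R) (u : state -> R) :
  dsummable (fun x => pi x * u x) ->
  dsummable (fun x => pi x * (a * u x)) /\ ExpR pi (fun x => a * u x) = a * ExpR pi u.
Proof.
  intros Hu. destruct (dsum_scal a _ Hu) as [Hs Heq].
  assert (Hcomm : forall x, a * (pi x * u x) = pi x * (a * u x)) by (intro x; ring).
  split; [exact (dsummable_ext _ _ Hcomm Hs) |].
  unfold ExpR. rewrite <- Heq. symmetry. exact (dsum_ext _ _ Hcomm).
Qed.

Lemma ExpC_bound (g : state -> C) (h : state -> R) :
  (forall x, Cmod (g x) <= h x) -> dsummable (fun x => pi x * h x) ->
  integrableC pi g /\ Cmod (ExpC pi g) <= 2 * ExpR pi h.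
Proof.
  intros Hgh Hh.
  assert (Hdom : forall x, pi x * Cmod (g x) <= pi x * h x)
    by (intro x; apply Rmult_le_compat_l; auto).
  assert (Hint : integrableC pi g).
  { refine (proj1 (dsum_dominated _ _ _ Hh)). intro x.
    rewrite Rabs_pos_eq by (apply Rmult_le_pos; [apply hpi | apply Cmod_ge_0]). apply Hdom. }
  split; [exact Hint |].
  assert (Hre : Rabs (Re (ExpC pi g)) <= ExpR pi h).
  { change (Re (ExpC pi g)) with (dsum (fun x => Re (RtoC (pi x) * g x)%C)).
    refine (proj2 (dsum_dominated _ _ _ Hh)). intro x.
    rewrite re_scal_l, Rabs_mult, (Rabs_pos_eq (pi x)) by apply hpi.
    eapply Rle_trans; [| apply Hdom]. apply Rmult_le_compat_l; [apply hpi | apply re_le_Cmod]. }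
  assert (Him : Rabs (Im (ExpC pi g)) <= ExpR pi h).
  { change (Im (ExpC pi g)) with (dsum (fun x => Im (RtoC (pi x) * g x)%C)).
    refine (proj2 (dsum_dominated _ _ _ Hh)). intro x.
    rewrite im_scal_l, Rabs_mult, (Rabs_pos_eq (pi x)) by apply hpi.
    eapply Rle_trans; [| apply Hdom].
    apply Rmult_le_compat_l; [apply hpi | apply Rabs_Im_le_Cmod]. }
  pose proof (Cmod_le_Rabs_Re_Im (ExpC pi g)). lra.
Qed.

Lemma ExpC_minus (f g : state -> C) : integrableC pi f -> integrableC pi g ->
  (ExpC pi f - ExpC pi g)%C = ExpC pi (fun x => f x - g x)%C.
Proof.
  intros Hf Hg.
  assert (Hparts : forall h, integrableC pi h ->
            dsummable (fun x => Re (RtoC (pi x) * h x)%C) /\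
            dsummable (fun x => Im (RtoC (pi x) * h x)%C)).
  { intros h Hint. split; refine (proj1 (dsum_dominated _ _ _ Hint)); intro x;
      rewrite ?re_scal_l, ?im_scal_l, Rabs_mult, (Rabs_pos_eq (pi x)) by apply hpi;
      apply Rmult_le_compat_l; auto using re_le_Cmod, Rabs_Im_le_Cmod. }
  destruct (Hparts f Hf) as [Hfre Hfim], (Hparts g Hg) as [Hgre Hgim].
  unfold ExpC, dsumC, Cminus, Cplus, Copp. cbn [fst snd].
  apply injective_projections; cbn [fst snd];
    match goal with |- ?a + - ?b = _ => change (a + - b) with (a - b) end;
    rewrite <- dsum_minus by assumption; apply dsum_ext; intro x;
    unfold Re, Im, Cmult, RtoC; cbn [fst snd]; ring.
Qed.

End Expectations.

Lemma CondExpC_bounded (pi : state -> R) (A : state -> bool) (g : state -> C) :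
  is_prob pi -> (forall x, Cmod (g x) <= 1) ->
  integrableC pi (restrC A g) /\ Cmod (CondExpC pi A g) <= 2.
Proof.
  intros [hpi [hsum _]] Hg.
  set (ind := fun x => if A x then 1 else 0).
  assert (Hind : dsummable (fun x => pi x * ind x)).
  { refine (proj1 (dsum_dominated _ pi _ hsum)). intro x. unfold ind.
    destruct (A x); rewrite ?Rmult_1_r, ?Rmult_0_r, ?Rabs_R0, ?Rabs_pos_eq by apply hpi;
      [lra | apply hpi]. }
  assert (HPr : ExpR pi ind = Pr pi A)
    by (apply dsum_ext; intro x; unfold ind; destruct (A x); ring).
  destruct (ExpC_bound pi hpi (restrC A g) ind) as [Hint Hbound]; [| exact Hind |].
  { intro x. unfold restrC, ind. destruct (A x); [apply Hg | rewrite Cmod_0; lra]. }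
  split; [exact Hint |].
  assert (HP0 : 0 <= Pr pi A).
  { rewrite <- HPr. apply dsum_nonneg; [| exact Hind].
    intro x. apply Rmult_le_pos; [apply hpi | unfold ind; destruct (A x); lra]. }
  rewrite HPr in Hbound. unfold CondExpC. rewrite Cmod_mult, Cmod_R.
  destruct HP0 as [HP | HP].
  - rewrite Rabs_pos_eq by (left; now apply Rinv_0_lt_compat).
    apply Rle_trans with (2 * Pr pi A * / Pr pi A); [| right; field; lra].
    apply Rmult_le_compat_r; [left; now apply Rinv_0_lt_compat | exact Hbound].
  - (* Rocq's [/ 0 = 0] makes the conditional expectation given a null event 0. *)
    rewrite <- HP, Rinv_0, Rabs_R0, Rmult_0_r. lra.
Qed.

Lemma small_of_linear_bound (epsbar : R) (P : R -> Prop) (f : R -> R) :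
  (exists e0 B, 0 < e0 /\
     forall eps, 0 < eps <= e0 -> eps < epsbar -> P eps /\ f eps <= eps * B) ->
  forall delta, 0 < delta -> exists e0, 0 < e0 /\
     forall eps, 0 < eps <= e0 -> eps < epsbar -> P eps /\ f eps < delta.
Proof.
  intros (e0 & B & He0 & HB) delta Hdelta.
  pose proof (Rabs_pos B). pose proof (Rle_abs B).
  exists (Rmin e0 (delta / (Rabs B + 1))). split.
  - apply Rmin_pos; [exact He0 | apply Rdiv_lt_0_compat; lra].
  - intros eps [Heps Hle] Hbar.
    assert (He : eps <= e0) by (eapply Rle_trans; [exact Hle | apply Rmin_l]).
    destruct (HB eps (conj Heps He) Hbar) as [HP Hf].
    split; [exact HP |].
    assert (Hsmall : eps * (Rabs B + 1) <= delta).
    { replace delta with (delta / (Rabs B + 1) * (Rabs B + 1)) by (field; lra).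
      apply Rmult_le_compat_r; [lra |]. eapply Rle_trans; [exact Hle | apply Rmin_r]. }
    nra.
Qed.

Section StateSpaceCollapse.

Variables (epsbar : R) (pi : R -> state -> R) (phi1 phi2 : C).
Hypothesis hprob : forall eps, 0 < eps < epsbar -> is_prob (pi eps).
Hypothesis hssc : ssc epsbar pi.
Hypotheses (hphi1 : Re phi1 <= 0) (hphi12 : Re (phi1 + phi2)%C <= 0).

Lemma joint_transform_bounded :
  exists e0 M, 0 < e0 /\ forall eps, 0 < eps <= e0 -> eps < epsbar ->
    integrableC (pi eps) (tr_joint phi1 phi2 eps) /\
    Cmod (ExpC (pi eps) (tr_joint phi1 phi2 eps)) <= M.
Proof.
  destruct (proj1 hssc (- 2 * Re phi1)) as (e0 & Cstar & He0 & Hexp); [lra |].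
  exists e0, (2 * Cstar). split; [exact He0 |]. intros eps Heps Hbar.
  destruct (Hexp eps Heps Hbar) as [Hsum Hmean].
  destruct (hprob eps) as [hpi _]; [lra |].
  destruct (ExpC_bound (pi eps) hpi (tr_joint phi1 phi2 eps)
              (fun x => exp (eps * (- 2 * Re phi1) * qperp_norm x))) as [Hint Hbound];
    [intro x; apply Cmod_tr_joint_le; lra | exact Hsum |].
  split; [exact Hint | lra].
Qed.

Lemma cond_q2_transform_bounded :
  exists e0 M, 0 < e0 /\ forall eps, 0 < eps <= e0 -> eps < epsbar ->
    integrableC (pi eps) (restrC ev_q1_le_q2 (tr_q2 phi1 phi2 eps)) /\
    Cmod (CondExpC (pi eps) ev_q1_le_q2 (tr_q2 phi1 phi2 eps)) <= M.
Proof.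
  exists 1, 2. split; [lra |]. intros eps Heps Hbar.
  apply CondExpC_bounded; [apply hprob; lra | intro x; apply Cmod_tr_q2_le_1; lra].
Qed.

Lemma cond_q1_transform_bounded :
  exists e0 M, 0 < e0 /\ forall eps, 0 < eps <= e0 -> eps < epsbar ->
    integrableC (pi eps) (restrC ev_q2_eq0 (tr_q1 phi1 eps)) /\
    Cmod (CondExpC (pi eps) ev_q2_eq0 (tr_q1 phi1 eps)) <= M.
Proof.
  exists 1, 2. split; [lra |]. intros eps Heps Hbar.
  apply CondExpC_bounded; [apply hprob; lra | intro x; apply Cmod_tr_q1_le_1; lra].
Qed.

Lemma joint_sub_collapsed_linear :
  exists e0 B, 0 < e0 /\ forall eps, 0 < eps <= e0 -> eps < epsbar ->
    integrableC (pi eps) (tr_collapsed phi1 phi2 eps) /\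
    Cmod (ExpC (pi eps) (tr_joint phi1 phi2 eps) -
          ExpC (pi eps) (tr_collapsed phi1 phi2 eps))%C <= eps * B.
Proof.
  pose proof (Cmod_ge_0 phi1) as Hc.
  destruct (proj1 hssc (4 * Cmod phi1)) as (e0 & Cstar & He0 & Hexp); [lra |].
  destruct (proj2 hssc 2%nat) as [C2 Hmom].
  exists e0, (2 * Cmod phi1 * (C2 + Cstar)). split; [exact He0 |]. intros eps Heps Hbar.
  destruct (hprob eps) as [hpi [hsum _]]; [lra |].
  destruct (Hexp eps Heps Hbar) as [Hsum_exp Hmean_exp].
  destruct (Hmom eps (conj (proj1 Heps) Hbar)) as [Hsum_sq Hmean_sq].
  destruct (ExpC_bound (pi eps) hpi (tr_collapsed phi1 phi2 eps) (fun _ => 1))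
    as [Hint_coll _];
    [intro x; apply Cmod_tr_collapsed_le_1; lra |
     exact (dsummable_ext _ _ (fun x => eq_sym (Rmult_1_r _)) hsum) |].
  destruct (ExpC_bound (pi eps) hpi (tr_joint phi1 phi2 eps)
              (fun x => exp (eps * (4 * Cmod phi1) * qperp_norm x))) as [Hint_joint _];
    [| exact Hsum_exp |].
  { intro x. eapply Rle_trans; [apply Cmod_tr_joint_le; lra |]. apply exp_le_exp.
    pose proof (qperp_norm_nonneg x). pose proof (re_le_Cmod phi1).
    rewrite Rabs_left1 in * by exact hphi1.
    apply Rmult_le_compat_r; [assumption |]. apply Rmult_le_compat_l; lra. }
  split; [exact Hint_coll |].
  rewrite ExpC_minus by assumption.
  destruct (ExpR_plus (pi eps) _ _ Hsum_sq Hsum_exp) as [Hsum_plus Hplus].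
  destruct (ExpR_scal (pi eps) (eps * Cmod phi1) _ Hsum_plus) as [Hsum_bound Hscal].
  destruct (ExpC_bound (pi eps) hpi _ _
              (fun x => Cmod_tr_joint_sub_collapsed_le phi1 phi2 eps
                          (Rlt_le _ _ (proj1 Heps)) hphi1 hphi12 x) Hsum_bound)
    as [_ Hdiff].
  rewrite Hscal, Hplus in Hdiff.
  assert (0 <= eps * Cmod phi1) by nra.
  nra.
Qed.

End StateSpaceCollapse.

Theorem lemma8
  (mu1 mu2 gamma epsbar : R)
  (hmu1 : 0 < mu1) (hmu2 : 0 < mu2) (hgamma : 0 < gamma)
  (hepsbar : 0 < epsbar <= 1)
  (hlam2 : forall eps, 0 < eps < epsbar -> 0 < lam2 mu1 mu2 gamma eps)
  (sigma : R -> state -> R) (pi : R -> state -> R)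
  (hpol : forall eps, 0 < eps < epsbar -> policy_ok (sigma eps))
  (hirr : forall eps, 0 < eps < epsbar -> irreducible mu1 mu2 gamma eps (sigma eps))
  (hstat : forall eps, 0 < eps < epsbar -> stationary mu1 mu2 gamma eps (sigma eps) (pi eps))
  (hssc : ssc epsbar pi)
  (phi1 phi2 : C)
  (hphi1 : Re phi1 <= 0) (hphi12 : Re (Cplus phi1 phi2) <= 0) :
  (* 1. the limits as eps -> 0 of the moduli are finite *)
  (exists e0 M, 0 < e0 /\ forall eps, 0 < eps <= e0 -> eps < epsbar ->
     integrableC (pi eps) (tr_joint phi1 phi2 eps) /\
     Cmod (ExpC (pi eps) (tr_joint phi1 phi2 eps)) <= M) /\
  (exists e0 M, 0 < e0 /\ forall eps, 0 < eps <= e0 -> eps < epsbar ->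
     integrableC (pi eps) (restrC ev_q1_le_q2 (tr_q2 phi1 phi2 eps)) /\
     Cmod (CondExpC (pi eps) ev_q1_le_q2 (tr_q2 phi1 phi2 eps)) <= M) /\
  (exists e0 M, 0 < e0 /\ forall eps, 0 < eps <= e0 -> eps < epsbar ->
     integrableC (pi eps) (restrC ev_q2_eq0 (tr_q1 phi1 eps)) /\
     Cmod (CondExpC (pi eps) ev_q2_eq0 (tr_q1 phi1 eps)) <= M) /\
  (* 2. the two transforms have the same limit as eps -> 0 *)
  (forall delta, 0 < delta -> exists e0, 0 < e0 /\
     forall eps, 0 < eps <= e0 -> eps < epsbar ->
       integrableC (pi eps) (tr_collapsed phi1 phi2 eps) /\
       Cmod (Cminus (ExpC (pi eps) (tr_joint phi1 phi2 eps))
                    (ExpC (pi eps) (tr_collapsed phi1 phi2 eps))) < delta).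
Proof.
  assert (hprob : forall eps, 0 < eps < epsbar -> is_prob (pi eps))
    by (intros eps Heps; apply (hstat eps Heps)).
  split; [| split; [| split]].
  - exact (joint_transform_bounded epsbar pi phi1 phi2 hprob hssc hphi1 hphi12).
  - exact (cond_q2_transform_bounded epsbar pi phi1 phi2 hprob hphi12).
  - exact (cond_q1_transform_bounded epsbar pi phi1 hprob hphi1).
  - apply small_of_linear_bound.
    exact (joint_sub_collapsed_linear epsbar pi phi1 phi2 hprob hssc hphi1 hphi12).
Qed.
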